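(* Let $\nu\in\mathbb{N}$, let $(X,d)$ be a complete $\nu$-generalized metric space, and let $T:X\to X$ be sequentially continuous and asymptotically regular. For $\gamma>0$ define $m:X\times X\to[0,\infty)$ by $m(x,y)=d(x,y)+\gamma\bigl(d(x,Tx)+d(y,Ty)\bigr)$. Suppose $d(Tx,Ty)<m(x,y)$ for all $x,y\in X$ with $x\ne y$, and that for every $\epsilon>0$ there exist $\delta>0$ and $N\in\mathbb{Z}^+$ such that for all $x,y\in X$, $m(T^Nx,T^Ny)<\delta+\epsilon$ implies $d(T^{N+1}x,T^{N+1}y)\le\epsilon$. Then $T$ has a unique fixed point $z$, and for every $x\in X$ the Picard iterates $T^nx$ $(n\in\mathbb{N})$ converge to $z$ in the strong sense.
   Context: Let $X$ be a nonempty set, $d:X\times X\to[0,\infty)$, and $\nu\in\mathbb{N}$. $(X,d)$ is a $\nu$-generalized metric space if: (1) $d(x,y)=0$ iff $x=y$; (2) $d(x,y)=d(y,x)$ for all $x,y$; (3) $d(x,y)\le d(x,u_1)+d(u_1,u_2)+\dots+d(u_\nu,y)$ for every set $\{x,u_1,\dots,u_\nu,y\}$ of $\nu+2$ pairwise distinct elements of $X$. A sequence $\{x_n\}$ in $X$ is Cauchy if $\lim_{n\to\infty}\sup\{d(x_n,x_{n+1+m}): m\in\mathbb{Z}^+\}=0$ ($\mathbb{Z}^+$ the nonnegative integers). $\{x_n\}$ converges to $x$ if $d(x,x_n)\to0$; it converges to $x$ in the strong sense if it is Cauchy and converges to $x$. $X$ is complete if every Cauchy sequence in $X$ converges. $T$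 is sequentially continuous if $\{Tx_n\}$ converges to $Tx$ whenever $\{x_n\}$ converges to $x$. $T$ is asymptotically regular if $d(T^nx,T^{n+1}x)+d(T^nx,T^{n+2}x)\to0$ for every $x\in X$. $T^0$ is the identity and $T^n$ the $n$-th iterate. *)

From Stdlib Require Import Reals Lra Lia List.
Open Scope R_scope.

Fixpoint path_len {X : Type} (d : X -> X -> R) (x : X) (l : list X) : R :=
  match l with
  | nil => 0
  | y :: l' => d x y + path_len d y l'
  end.

(* (X,d) is a nu-generalized metric space. The nu intermediate points
   u_1..u_nu are given as u 0, ..., u (nu-1). *)
Definition gen_metric {X : Type} (nu : nat) (d : X -> X -> R) : Prop :=
  (forall x y, 0 <= d x y) /\
  (forall x y, d x y = 0 <-> x = y) /\
  (forall x y, d x y = d y x) /\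
  (forall (x y : X) (u : nat -> X),
     NoDup (x :: map u (seq 0 nu) ++ y :: nil) ->
     d x y <= path_len d x (map u (seq 0 nu) ++ y :: nil)).

Definition is_Cauchy {X : Type} (d : X -> X -> R) (s : nat -> X) : Prop :=
  forall eps, eps > 0 -> exists N, forall n m, (n >= N)%nat ->
    d (s n) (s (n + 1 + m)%nat) <= eps.

Definition converges_to {X : Type} (d : X -> X -> R) (s : nat -> X) (x : X) : Prop :=
  Un_cv (fun n => d x (s n)) 0.

Definition converges_strong {X : Type} (d : X -> X -> R) (s : nat -> X) (x : X) : Prop :=
  is_Cauchy d s /\ converges_to d s x.

Definition complete {X : Type} (d : X -> X -> R) : Prop :=
  forall s : nat -> X, is_Cauchy d s -> exists x, converges_to d s x.

Definition seq_continuous {X : Type} (d : X -> X -> R) (T : X -> X) : Prop :=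
  forall (s : nat -> X) (x : X), converges_to d s x ->
    converges_to d (fun n => T (s n)) (T x).

Definition iterT {X : Type} (T : X -> X) (n : nat) (x : X) : X := Nat.iter n T x.

Definition asympt_regular {X : Type} (d : X -> X -> R) (T : X -> X) : Prop :=
  forall x, Un_cv (fun n => d (iterT T n x) (iterT T (S n) x)
                            + d (iterT T n x) (iterT T (S (S n)) x)) 0.

From Stdlib Require Import Reals Lra Lia List Classical Arith.
Open Scope R_scope.

(* The asymptotic regularity makes the steps d(x_k, x_{k+1}) and d(x_k, x_{k+2})
   of an orbit eventually small.  If the orbit repeats a point it is periodic,
   and a periodic orbit with vanishing steps is a fixed point.  Otherwise the
   orbit is injective, so the nu-polygon inequality applies to any nu + 2 of
   its points.  A zigzag through nearby indices bounds d(x_p, x_{p+j}) for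
   j <= nu + 1 by (nu + 1) small steps; for larger j, walk nu unit steps to
   x_{p+nu} and control the last edge d(x_{p+nu}, x_{p+j}) = d(T x_{p+nu-1},
   T x_{p+j-1}) by the Meir-Keeler type hypothesis and induction on j.  This
   gives the Cauchy property; the limit is fixed by continuity, because limits
   of injective sequences with vanishing steps are unique, and the contractive
   inequality leaves room for only one fixed point. *)

Lemma Un_cv_eventually_lt (u : nat -> R) :
  Un_cv u 0 -> forall e, e > 0 -> exists N, forall n, (N <= n)%nat -> u n < e.
Proof.
  intros Hu e He. destruct (Hu e He) as [N HN]. exists N. intros n Hn.
  specialize (HN n Hn). unfold R_dist in HN. rewrite Rminus_0_r in HN.
  pose proof (Rle_abs (u n)). lra.
Qed.

Lemma exists_small_pos (A B eta : R) :
  0 <= A -> 0 <= B -> 0 < eta -> exists c, 0 < c /\ A * c < eta /\ B * c < eta.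
Proof.
  intros HA HB Heta. exists (eta / (A + B + 1)).
  assert (Hc : 0 < eta / (A + B + 1)) by (apply Rdiv_lt_0_compat; lra).
  assert (E : (A + B + 1) * (eta / (A + B + 1)) = eta) by (field; lra).
  pose proof (Rmult_le_pos _ _ HA (Rlt_le _ _ Hc)).
  pose proof (Rmult_le_pos _ _ HB (Rlt_le _ _ Hc)).
  lra.
Qed.

Lemma injective_eventually_avoids {X : Type} (s : nat -> X) (v : X) :
  (forall n m, s n = s m -> n = m) -> exists n0, forall n, (n0 <= n)%nat -> s n <> v.
Proof.
  intro s_inj. destruct (classic (exists n, s n = v)) as [[n1 E] | no_hit].
  - exists (S n1). intros n Hn E'. rewrite <- E in E'. apply s_inj in E'. lia.
  - exists 0%nat. intros n _ E. apply no_hit. eauto.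
Qed.

(* The index path 0, 1, ..., j-1, then upwards through j+1, j+3, ... and back
   down through the even offsets to j: it visits each of 0, ..., n exactly once
   with steps of length 1 or 2, and ends at j. *)
Definition zigzag (n j i : nat) : nat :=
  if (i <? j)%nat then i
  else (j + if (2 * (i - j) + 1 <=? n - j)%nat then 2 * (i - j) + 1 else 2 * (n - i))%nat.

Ltac zigzag_cases :=
  unfold zigzag; repeat match goal with
  | |- context [ (?a <? ?b)%nat ] => destruct (Nat.ltb_spec a b)
  | |- context [ (?a <=? ?b)%nat ] => destruct (Nat.leb_spec a b)
  end; lia.

Lemma zigzag_0 n j : (1 <= j)%nat -> zigzag n j 0 = 0%nat.
Proof. intros; zigzag_cases. Qed.

Lemma zigzag_end n j : (j <= n)%nat -> zigzag n j n = j.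
Proof. intros; zigzag_cases. Qed.

Lemma zigzag_inj n j i i' : (j <= n)%nat -> (i <= n)%nat -> (i' <= n)%nat ->
  zigzag n j i = zigzag n j i' -> i = i'.
Proof. intros ? ? ?; zigzag_cases. Qed.

Lemma zigzag_step n j i : (1 <= j <= n)%nat -> (i < n)%nat ->
  let a := zigzag n j i in let b := zigzag n j (S i) in
  (b = a + 1 \/ b = a + 2 \/ a = b + 1 \/ a = b + 2)%nat.
Proof. intros Hj Hi; cbv zeta; zigzag_cases. Qed.

Lemma iterT_add {X : Type} (T : X -> X) a b x :
  iterT T (a + b) x = iterT T a (iterT T b x).
Proof. unfold iterT. induction a; simpl; congruence. Qed.

Lemma iterT_periodic {X : Type} (T : X -> X) n p x :
  iterT T (p + n) x = iterT T n x -> forall t, iterT T (t * p + n) x = iterT T n x.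
Proof.
  intros Hp t. induction t as [|t IH]; [reflexivity|].
  replace (S t * p + n)%nat with (p + (t * p + n))%nat by lia.
  now rewrite iterT_add, IH, <- iterT_add.
Qed.

Lemma iterT_fixed_from {X : Type} (T : X -> X) n x :
  T (iterT T n x) = iterT T n x -> forall k, (n <= k)%nat -> iterT T k x = iterT T n x.
Proof.
  intros Hfix k Hk. replace k with (k - n + n)%nat by lia.
  induction (k - n)%nat as [|t IH]; [reflexivity|].
  change (T (iterT T (t + n) x) = iterT T n x). now rewrite IH.
Qed.

Section GeneralizedMetric.

Variables (X : Type) (nu : nat) (d : X -> X -> R).
Hypothesis d_gen : gen_metric nu d.

Lemma dist_ge0 x y : 0 <= d x y.
Proof. apply d_gen. Qed.

Lemma dist_sym x y : d x y = d y x.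
Proof. apply d_gen. Qed.

Lemma dist_xx x : d x x = 0.
Proof. now apply d_gen. Qed.

Lemma dist_pos x y : x <> y -> 0 < d x y.
Proof.
  intro Hxy. destruct (dist_ge0 x y) as [|E]; [assumption|].
  exfalso. apply Hxy, d_gen. now symmetry.
Qed.

Lemma converges_to_eventually_lt s z :
  converges_to d s z -> forall e, e > 0 -> exists N, forall n, (N <= n)%nat -> d z (s n) < e.
Proof. apply Un_cv_eventually_lt. Qed.

Lemma converges_strong_eventually_const (s : nat -> X) z n0 :
  (forall n, (n0 <= n)%nat -> s n = z) -> converges_strong d s z.
Proof.
  intros Hconst. split.
  - intros e He. exists n0. intros n m Hn.
    rewrite !Hconst by lia. rewrite dist_xx. lra.
  - intros e He. exists n0. intros n Hn. unfold R_dist.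
    rewrite Hconst, dist_xx, Rminus_0_r, Rabs_R0 by lia. lra.
Qed.

Lemma path_len_snoc (w : nat -> X) k n :
  path_len d (w k) (map w (seq (S k) (S n))) =
  path_len d (w k) (map w (seq (S k) n)) + d (w (k + n)%nat) (w (S (k + n))).
Proof.
  revert k. induction n as [|n IH]; intro k.
  - simpl. rewrite Nat.add_0_r. lra.
  - change (seq (S k) (S (S n))) with (S k :: seq (S (S k)) (S n)).
    change (seq (S k) (S n)) with (S k :: seq (S (S k)) n).
    cbn [map path_len]. rewrite IH.
    replace (S k + n)%nat with (k + S n)%nat by lia. lra.
Qed.

Lemma path_len_le (w : nat -> X) c k n :
  (forall i, (i < n)%nat -> d (w (k + i)%nat) (w (S (k + i))) <= c) ->
  path_len d (w k) (map w (seq (S k) n)) <= INR n * c.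
Proof.
  revert k. induction n as [|n IH]; intros k Hsteps.
  - simpl. lra.
  - change (seq (S k) (S n)) with (S k :: seq (S (S k)) n).
    cbn [map path_len]. rewrite S_INR.
    assert (H0 := Hsteps 0%nat ltac:(lia)). rewrite Nat.add_0_r in H0.
    assert (Hrest : path_len d (w (S k)) (map w (seq (S (S k)) n)) <= INR n * c).
    { apply IH. intros i Hi.
      replace (S k + i)%nat with (k + S i)%nat by lia. apply Hsteps. lia. }
    lra.
Qed.

Lemma polygon_inequality (w : nat -> X) :
  (forall i j, (i <= S nu)%nat -> (j <= S nu)%nat -> w i = w j -> i = j) ->
  d (w 0%nat) (w (S nu)) <= path_len d (w 0%nat) (map w (seq 1 (S nu))).
Proof.
  intro w_inj. destruct d_gen as [_ [_ [_ polygon]]].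
  specialize (polygon (w 0%nat) (w (S nu)) (fun i => w (S i))).
  replace (map (fun i => w (S i)) (seq 0 nu)) with (map w (seq 1 nu)) in polygon
    by (rewrite <- seq_shift, map_map; reflexivity).
  rewrite seq_S, map_app. apply polygon.
  replace (map w (seq 1 nu) ++ w (S nu) :: nil) with (map w (seq 1 (S nu)))
    by (rewrite seq_S, map_app; reflexivity).
  change (NoDup (map w (seq 0 (S (S nu))))).
  apply NoDup_map_NoDup_ForallPairs; [|apply seq_NoDup].
  intros i j Hi Hj. apply in_seq in Hi, Hj. apply w_inj; lia.
Qed.

Lemma polygon_le (w : nat -> X) c :
  (forall i j, (i <= S nu)%nat -> (j <= S nu)%nat -> w i = w j -> i = j) ->
  (forall i, (i < nu)%nat -> d (w i) (w (S i)) <= c) ->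
  d (w 0%nat) (w (S nu)) <= INR nu * c + d (w nu) (w (S nu)).
Proof.
  intros w_inj Hsteps.
  eapply Rle_trans; [now apply polygon_inequality|].
  rewrite (path_len_snoc w 0 nu). apply Rplus_le_compat_r.
  now apply path_len_le.
Qed.

Lemma polygon_le_uniform (w : nat -> X) c :
  (forall i j, (i <= S nu)%nat -> (j <= S nu)%nat -> w i = w j -> i = j) ->
  (forall i, (i <= nu)%nat -> d (w i) (w (S i)) <= c) ->
  d (w 0%nat) (w (S nu)) <= INR (S nu) * c.
Proof.
  intros w_inj Hsteps.
  pose proof (polygon_le w c w_inj (fun i Hi => Hsteps i ltac:(lia))).
  pose proof (Hsteps nu (le_n nu)). rewrite S_INR. lra.
Qed.

Hypothesis nu_pos : (1 <= nu)%nat.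

Section InjectiveSequence.

Variable s : nat -> X.
Hypothesis s_inj : forall n m, s n = s m -> n = m.

Lemma limit_unique_injective z y :
  (forall c, c > 0 -> exists K, forall k, (K <= k)%nat -> d (s k) (s (S k)) < c) ->
  converges_to d s z -> converges_to d s y -> z = y.
Proof.
  intros Hsteps Hz Hy. apply NNPP. intro z_ne_y.
  destruct (injective_eventually_avoids s z s_inj) as [nz Hnz].
  destruct (injective_eventually_avoids s y s_inj) as [ny Hny].
  assert (Hsmall : forall e, e > 0 -> d z y <= INR (S nu) * e).
  { intros e He.
    destruct (converges_to_eventually_lt s z Hz e He) as [Nz HNz].
    destruct (converges_to_eventually_lt s y Hy e He) as [Ny HNy].
    destruct (Hsteps e He) as [Ks HKs].
    set (n := (nz + ny + Nz + Ny + Ks)%nat).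
    set (w := fun i => match i with
                       | O => z
                       | S i' => if (i' <? nu)%nat then s (n + i')%nat else y
                       end).
    change z with (w 0%nat).
    replace y with (w (S nu)) by (cbv beta iota delta [w]; now rewrite Nat.ltb_irrefl).
    apply polygon_le_uniform.
    - intros [|i] [|j] Hi Hj E; cbv beta iota delta [w] in E; try reflexivity;
        repeat match type of E with context [ (?a <? ?b)%nat ] =>
          destruct (Nat.ltb_spec a b) end;
        first [ lia | congruence | apply s_inj in E; lia
              | exfalso; eapply Hnz; [|eassumption || (symmetry; eassumption)]; lia
              | exfalso; eapply Hny; [|eassumption || (symmetry; eassumption)]; lia ].
    - intros [|i] Hi; cbv beta iota delta [w].
      + destruct (Nat.ltb_spec 0 nu); [|lia]. rewrite Nat.add_0_r.
        left. apply HNz. unfold n. lia.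
      + destruct (Nat.ltb_spec i nu); [|lia].
        destruct (Nat.ltb_spec (S i) nu).
        * replace (n + S i)%nat with (S (n + i)) by lia.
          left. apply HKs. unfold n. lia.
        * rewrite dist_sym. left. apply HNy. unfold n. lia. }
  apply z_ne_y, d_gen. apply Rle_antisym; [|apply dist_ge0].
  apply Rle_plus_epsilon. intros eps Heps.
  assert (HSnu : 0 < INR (S nu)) by (apply lt_0_INR; lia).
  pose proof (Hsmall (eps / INR (S nu)) ltac:(apply Rdiv_lt_0_compat; lra)).
  replace (INR (S nu) * (eps / INR (S nu))) with eps in * by (field; lra). lra.
Qed.

Section SmallSteps.

Variables (K : nat) (c : R).
Hypothesis steps_lt : forall k, (K <= k)%nat ->
  d (s k) (s (S k)) < c /\ d (s k) (s (S (S k))) < c.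

Lemma dist_lt_of_index_gap a b : (K <= a)%nat -> (K <= b)%nat ->
  (b = a + 1 \/ b = a + 2 \/ a = b + 1 \/ a = b + 2)%nat -> d (s a) (s b) < c.
Proof.
  intros Ha Hb Hgap.
  destruct Hgap as [E | [E | [E | E]]]; subst;
    rewrite ?(dist_sym (s (_ + _)%nat));
    [ rewrite Nat.add_1_r | replace (a + 2)%nat with (S (S a)) by lia
    | rewrite Nat.add_1_r | replace (b + 2)%nat with (S (S b)) by lia ];
    apply steps_lt; lia.
Qed.

Lemma dist_short_range p j : (K <= p)%nat -> (1 <= j <= S nu)%nat ->
  d (s p) (s (p + j)%nat) <= INR (S nu) * c.
Proof.
  intros Hp Hj.
  set (w := fun i => s (p + zigzag (S nu) j i)%nat).
  replace (s p) with (w 0%nat) by (cbv beta delta [w]; now rewrite zigzag_0, Nat.add_0_r by lia).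
  replace (s (p + j)%nat) with (w (S nu)) by (cbv beta delta [w]; now rewrite zigzag_end by lia).
  apply polygon_le_uniform.
  - intros i i' Hi Hi' E. apply s_inj in E. apply (zigzag_inj (S nu) j); lia.
  - intros i Hi. left. apply dist_lt_of_index_gap; try lia.
    pose proof (zigzag_step (S nu) j i Hj ltac:(lia)). cbv zeta in *. lia.
Qed.

Lemma dist_long_range gamma eps delta :
  0 <= gamma -> 0 < eps -> INR (S nu) * c <= delta / 2 -> 4 * gamma * c < delta ->
  (forall q r, (K <= q)%nat -> (K <= r)%nat ->
     d (s q) (s r) + gamma * (d (s q) (s (S q)) + d (s r) (s (S r))) < delta + eps ->
     d (s (S q)) (s (S r)) <= eps) ->
  forall j p, (1 <= j)%nat -> (K <= p)%nat -> d (s p) (s (p + j)%nat) <= eps + delta / 2.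
Proof.
  intros Hgamma Heps Hc Hgc contract j.
  assert (c_ge0 : 0 <= c).
  { pose proof (dist_ge0 (s K) (s (S K))). pose proof (proj1 (steps_lt K (le_n K))). lra. }
  induction j as [j IH] using lt_wf_ind. intros p Hj Hp.
  destruct (le_lt_dec j (S nu)) as [Hshort | Hlong].
  { pose proof (dist_short_range p j Hp (conj Hj Hshort)). lra. }
  set (w := fun i => s (p + if (i <=? nu)%nat then i else j)%nat).
  replace (s p) with (w 0%nat) by (cbv beta delta [w]; now rewrite Nat.add_0_r).
  replace (s (p + j)%nat) with (w (S nu))
    by (cbv beta delta [w]; destruct (Nat.leb_spec (S nu) nu); [lia | reflexivity]).
  eapply Rle_trans.
  { apply (polygon_le w c).
    - intros i i' Hi Hi' E. apply s_inj in E. revert E.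
      destruct (Nat.leb_spec i nu), (Nat.leb_spec i' nu); lia.
    - intros i Hi. cbv beta delta [w].
      destruct (Nat.leb_spec i nu), (Nat.leb_spec (S i) nu); try lia.
      replace (p + S i)%nat with (S (p + i)) by lia.
      left. apply steps_lt. lia. }
  assert (Hlast : d (w nu) (w (S nu)) <= eps).
  { cbv beta delta [w].
    destruct (Nat.leb_spec nu nu), (Nat.leb_spec (S nu) nu); try lia.
    set (q := (p + nu - 1)%nat). set (r := (p + j - 1)%nat).
    replace (p + nu)%nat with (S q) by (unfold q; lia).
    replace (p + j)%nat with (S r) by (unfold r; lia).
    apply contract; try (unfold q, r; lia).
    assert (Hqr : d (s q) (s r) <= eps + delta / 2).
    { replace r with (q + (j - nu))%nat by (unfold q, r; lia).
      apply IH; unfold q; lia. }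
    destruct (steps_lt q ltac:(unfold q; lia)) as [Hq _].
    destruct (steps_lt r ltac:(unfold r; lia)) as [Hr _].
    assert (gamma * (d (s q) (s (S q)) + d (s r) (s (S r))) <= gamma * (2 * c))
      by (apply Rmult_le_compat_l; lra).
    lra. }
  rewrite S_INR in Hc. lra.
Qed.

End SmallSteps.

Lemma injective_cauchy gamma :
  0 <= gamma ->
  (forall c, c > 0 -> exists K, forall k, (K <= k)%nat ->
     d (s k) (s (S k)) < c /\ d (s k) (s (S (S k))) < c) ->
  (forall eps, eps > 0 -> exists delta N, delta > 0 /\
     forall q r, (N <= q)%nat -> (N <= r)%nat ->
       d (s q) (s r) + gamma * (d (s q) (s (S q)) + d (s r) (s (S r))) < delta + eps ->
       d (s (S q)) (s (S r)) <= eps) ->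
  is_Cauchy d s.
Proof.
  intros Hgamma Hsteps Hmk e He.
  destruct (Hmk (e / 2) ltac:(lra)) as [delta0 [N [Hdelta0 HN]]].
  set (delta := Rmin delta0 e).
  assert (Hdelta : 0 < delta) by (apply Rmin_pos; lra).
  assert (delta <= delta0) by apply Rmin_l.
  assert (delta <= e) by apply Rmin_r.
  destruct (exists_small_pos (INR (S nu)) (4 * gamma) (delta / 2) (pos_INR _)
              ltac:(lra) ltac:(lra)) as [c [Hc [Hc1 Hc2]]].
  destruct (Hsteps c Hc) as [K HK].
  exists (K + N)%nat. intros n m Hn.
  assert (Hlong := dist_long_range (K + N) c
            ltac:(intros k Hk; apply HK; lia) gamma (e / 2) delta
            Hgamma ltac:(lra) ltac:(lra) ltac:(lra)).
  specialize (Hlong ltac:(intros q r Hq Hr Hm; apply HN; lia || lra) (1 + m)%nat n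
                ltac:(lia) ltac:(lia)).
  replace (n + (1 + m))%nat with (n + 1 + m)%nat in Hlong by lia. lra.
Qed.

End InjectiveSequence.

End GeneralizedMetric.

Lemma fixed_point_unique {X : Type} (nu : nat) (d : X -> X -> R) (T : X -> X) gamma :
  gen_metric nu d ->
  (forall x y, x <> y -> d (T x) (T y) < d x y + gamma * (d x (T x) + d y (T y))) ->
  forall z w, T z = z -> T w = w -> w = z.
Proof.
  intros d_gen Hcontr z w Fz Fw. apply NNPP. intro Hne.
  specialize (Hcontr w z Hne). rewrite Fz, Fw, !(dist_xx X nu d d_gen) in Hcontr. lra.
Qed.

Section Orbit.

Variables (X : Type) (nu : nat) (d : X -> X -> R) (T : X -> X) (gamma : R).
Hypothesis d_gen : gen_metric nu d.
Hypothesis nu_pos : (1 <= nu)%nat.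
Hypothesis d_complete : complete d.
Hypothesis T_cont : seq_continuous d T.
Hypothesis T_reg : asympt_regular d T.
Hypothesis gamma_ge0 : 0 <= gamma.
Hypothesis T_mk : forall eps, eps > 0 -> exists delta, delta > 0 /\ exists N : nat,
  forall x y,
    d (iterT T N x) (iterT T N y)
      + gamma * (d (iterT T N x) (T (iterT T N x)) + d (iterT T N y) (T (iterT T N y)))
      < delta + eps ->
    d (iterT T (S N) x) (iterT T (S N) y) <= eps.

Lemma orbit_steps_small x c : c > 0 -> exists K, forall k, (K <= k)%nat ->
  d (iterT T k x) (iterT T (S k) x) < c /\ d (iterT T k x) (iterT T (S (S k)) x) < c.
Proof.
  intros Hc. destruct (Un_cv_eventually_lt _ (T_reg x) c Hc) as [K HK].
  exists K. intros k Hk. specialize (HK k Hk).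
  pose proof (dist_ge0 X nu d d_gen (iterT T k x) (iterT T (S k) x)).
  pose proof (dist_ge0 X nu d d_gen (iterT T k x) (iterT T (S (S k)) x)).
  lra.
Qed.

Lemma orbit_fixed_or_injective x :
  (exists n, T (iterT T n x) = iterT T n x) \/
  (forall n m, iterT T n x = iterT T m x -> n = m).
Proof.
  destruct (classic (exists n, T (iterT T n x) = iterT T n x)) as [| no_fix];
    [now left | right].
  assert (aperiodic : forall n p, iterT T (S p + n) x <> iterT T n x).
  { intros n p Hper. apply no_fix. exists n. apply NNPP. intro Hne.
    assert (Hpos : 0 < d (iterT T n x) (T (iterT T n x)))
      by (apply (dist_pos X nu d d_gen); congruence).
    destruct (orbit_steps_small x _ Hpos) as [K HK].
    destruct (HK (K * S p + n)%nat ltac:(nia)) as [Hstep _].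
    change (iterT T (S (K * S p + n)) x) with (T (iterT T (K * S p + n) x)) in Hstep.
    rewrite (iterT_periodic T n (S p) x Hper K) in Hstep. lra. }
  intros n m E. destruct (lt_eq_lt_dec n m) as [[Hlt | Heq] | Hgt]; [exfalso | exact Heq | exfalso].
  - apply (aperiodic n (m - n - 1)%nat). replace (S (m - n - 1) + n)%nat with m by lia. congruence.
  - apply (aperiodic m (n - m - 1)%nat). replace (S (n - m - 1) + m)%nat with n by lia. congruence.
Qed.

Lemma orbit_meir_keeler x eps : eps > 0 -> exists delta N, delta > 0 /\
  forall q r, (N <= q)%nat -> (N <= r)%nat ->
    d (iterT T q x) (iterT T r x)
      + gamma * (d (iterT T q x) (iterT T (S q) x) + d (iterT T r x) (iterT T (S r) x))
      < delta + eps ->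
    d (iterT T (S q) x) (iterT T (S r) x) <= eps.
Proof.
  intros Heps. destruct (T_mk eps Heps) as [delta [Hdelta [N HN]]].
  exists delta, N. split; [exact Hdelta|]. intros q r Hq Hr Hm.
  assert (shift : forall k, (N <= k)%nat -> iterT T N (iterT T (k - N) x) = iterT T k x).
  { intros k Hk. rewrite <- iterT_add. f_equal. lia. }
  specialize (HN (iterT T (q - N) x) (iterT T (r - N) x)).
  change (iterT T (S N) ?u) with (T (iterT T N u)) in HN.
  rewrite !shift in HN by assumption.
  exact (HN Hm).
Qed.

Lemma orbit_limit_fixed x z :
  (forall n m, iterT T n x = iterT T m x -> n = m) ->
  converges_to d (fun n => iterT T n x) z -> T z = z.
Proof.
  intros Hinj Hz.
  assert (HTz : converges_to d (fun n => iterT T n x) (T z)).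
  { intros e He. destruct (T_cont _ _ Hz e He) as [N HN].
    exists (S N). intros [|n] Hn; [lia|]. exact (HN n ltac:(lia)). }
  symmetry. apply (limit_unique_injective X nu d d_gen nu_pos _ Hinj z (T z)); try assumption.
  intros c Hc. destruct (orbit_steps_small x c Hc) as [K HK].
  exists K. intros k Hk. apply HK, Hk.
Qed.

Lemma orbit_converges_strong_to_fixed_point x :
  exists z, T z = z /\ converges_strong d (fun n => iterT T n x) z.
Proof.
  destruct (orbit_fixed_or_injective x) as [[n Hfix] | Hinj].
  - exists (iterT T n x). split; [exact Hfix|].
    apply (converges_strong_eventually_const X nu d d_gen _ _ n).
    now apply iterT_fixed_from.
  - assert (Hcauchy : is_Cauchy d (fun n => iterT T n x))
      by (apply (injective_cauchy X nu d d_gen nu_pos _ Hinj gamma gamma_ge0);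
          [apply orbit_steps_small | apply orbit_meir_keeler]).
    destruct (d_complete _ Hcauchy) as [z Hz].
    exists z. split; [|split]; try assumption.
    exact (orbit_limit_fixed x z Hinj Hz).
Qed.

End Orbit.

Theorem theorem3p7 (X : Type) (nu : nat) (d : X -> X -> R) (T : X -> X)
  (gamma : R) :
  inhabited X ->
  (1 <= nu)%nat ->
  gen_metric nu d ->
  complete d ->
  seq_continuous d T ->
  asympt_regular d T ->
  gamma > 0 ->
  let m := fun x y => d x y + gamma * (d x (T x) + d y (T y)) in
  (forall x y, x <> y -> d (T x) (T y) < m x y) ->
  (forall eps, eps > 0 -> exists delta, delta > 0 /\ exists N : nat,
     forall x y, m (iterT T N x) (iterT T N y) < delta + eps ->
       d (iterT T (S N) x) (iterT T (S N) y) <= eps) ->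
  exists z, T z = z /\ (forall w, T w = w -> w = z) /\
    (forall x, converges_strong d (fun n => iterT T n x) z).
Proof.
  intros [x0] Hnu Hgen Hcomp Hcont Hreg Hgamma m Hcontr Hmk.
  pose proof (fixed_point_unique nu d T gamma Hgen Hcontr) as Huniq.
  pose proof (orbit_converges_strong_to_fixed_point X nu d T gamma Hgen Hnu Hcomp Hcont
                Hreg (Rlt_le _ _ Hgamma) Hmk) as Horbit.
  destruct (Horbit x0) as [z [Hz _]].
  exists z. split; [exact Hz | split].
  - intros w Hw. exact (Huniq z w Hz Hw).
  - intros x. destruct (Horbit x) as [z' [Hz' Hconv]].
    now rewrite (Huniq z z' Hz Hz') in Hconv.
Qed.
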